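(* Fix $t>0$. Let $P$ be a $t$-convex polygon in the Lorentz plane. Then $P$ is a proper convex subset of $\mathbb{R}^2$ contained in $\mathcal{F}$, bounded by a polygonal line with a countable number of sides, and globally invariant under the action of the group $\langle H_t\rangle$.
   Context: The Lorentz plane is $\mathbb{R}^2$ with the bilinear form $\langle x,y\rangle_1=x_1y_1-x_2y_2$. Let $\mathcal{F}=\{x\in\mathbb{R}^2 : \langle x,x\rangle_1<0,\ x_2>0\}$ (future time-like vectors) and $\mathbb{H}=\{x\in\mathbb{R}^2:\langle x,x\rangle_1=-1,\ x_2>0\}$. For $s\in\mathbb{R}$ let $H_s=\begin{pmatrix}\cosh s&\sinh s\\ \sinh s&\cosh s\end{pmatrix}$ (hyperbolic translation), and $\langle H_t\rangle$ the group generated by $H_t$. For $a\in\mathcal{F}$, $a^{\bot}=\{x\in\mathbb{R}^2:\langle x,a\rangle_1=\langle a,a\rangle_1\}$. A $t$-convex polygon is defined as follows: given $n\geq1$ pairwise distinct vectors $\eta_1,\dots,\eta_n\in\mathbb{H}$ and positive numbers $h_1,\dots,h_n$, it is the intersection, over all $k\in\mathbb{Z}$ and $i=1,\dots,n$, of the closed half-planes bounded by the lines $(H_t^k(h_i\eta_i))^{\bot}$, each half-plane chosen so that the vector $H_t^k\eta_i$ points into it (i.e. the half-plane $\{x:\langle x,H_t^k\eta_i\rangle_1\le -h_i\}$). *)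

From Stdlib Require Import Reals ZArith.
Open Scope R_scope.

Definition pt := (R * R)%type.

Definition lor (x y : pt) : R := fst x * fst y - snd x * snd y.

Definition future_timelike (x : pt) : Prop := lor x x < 0 /\ snd x > 0.

Definition in_H (x : pt) : Prop := lor x x = -1 /\ snd x > 0.

Definition Hs (s : R) (x : pt) : pt :=
  (cosh s * fst x + sinh s * snd x, sinh s * fst x + cosh s * snd x).

(* H_t^k for k : Z (H_{-t} is the inverse matrix of H_t) *)
Definition Hpow (t : R) (k : Z) (x : pt) : pt :=
  match k with
  | Z0 => x
  | Zpos p => Nat.iter (Pos.to_nat p) (Hs t) x
  | Zneg p => Nat.iter (Pos.to_nat p) (Hs (- t)) x
  end.

Definition scal (c : R) (x : pt) : pt := (c * fst x, c * snd x).

Definition perp (a : pt) : pt -> Prop := fun x => lor x a = lor a a.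

(* closed half-plane bounded by (H_t^k (h eta))^perp into which H_t^k eta points *)
Definition halfplane (t : R) (k : Z) (eta : pt) (h : R) : pt -> Prop :=
  fun x => lor x (Hpow t k eta) <= - h.

Definition tconvex_polygon (t : R) (n : nat) (eta : nat -> pt) (h : nat -> R)
  : pt -> Prop :=
  fun x => forall (k : Z) (i : nat), (i < n)%nat -> halfplane t k (eta i) (h i) x.

Definition convex_set (P : pt -> Prop) : Prop :=
  forall x y l, P x -> P y -> 0 <= l <= 1 ->
    P ((1 - l) * fst x + l * fst y, (1 - l) * snd x + l * snd y).

Definition dist2 (x y : pt) : R := sqrt ((fst x - fst y)^2 + (snd x - snd y)^2).

Definition boundary (P : pt -> Prop) (x : pt) : Prop :=
  forall eps, eps > 0 ->
    (exists y, P y /\ dist2 x y < eps) /\ (exists z, ~ P z /\ dist2 x z < eps).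

Definition segment (a b : pt) (z : pt) : Prop :=
  exists l, 0 <= l <= 1 /\ z = ((1 - l) * fst a + l * fst b, (1 - l) * snd a + l * snd b).

Definition bounded_by_countable_polygonal_line (P : pt -> Prop) : Prop :=
  exists v : Z -> pt,
    (forall j1 j2, v j1 = v j2 -> j1 = j2) /\
    (forall z, boundary P z <-> exists j : Z, segment (v j) (v (j + 1)%Z) z).

Definition invariant_Ht (t : R) (P : pt -> Prop) : Prop :=
  forall (k : Z) (y : pt), (exists x, P x /\ y = Hpow t k x) <-> P y.

From Stdlib Require Import Reals ZArith Lra Lia Psatz List Classical.
Open Scope R_scope.

(* In the light-cone coordinates [p = x2 + x1], [q = x2 - x1] the translation [H_s] acts by
   [(p, q) |-> (e^s p, e^-s q)], and the half-plane attached to [H_t^k (h_i eta_i)] becomes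
   the epigraph [q >= 2 h_i u - u^2 p] of a tangent to the hyperbola [p q = h_i^2], where
   [u = 1 / p(H_t^k eta_i)].  So P is the epigraph of the supremum [g] of countably many affine
   functions, which forces [p, q > 0], and it is invariant under the rescalings
   [(p, q) |-> (e^(kt) p, e^(-kt) q)].  On the fundamental interval [[1, e^t]] only finitely
   many tangents matter, so there [g] is a maximum of finitely many affine functions, hence
   piecewise affine; rescaling these pieces gives a [Z]-indexed chain of segments exhausting
   the graph of [g], which is the boundary of P. *)

Definition lcp (x : pt) : R := snd x + fst x.
Definition lcq (x : pt) : R := snd x - fst x.
Definition of_lc (p q : R) : pt := ((p - q) / 2, (p + q) / 2).

Lemma lcp_of_lc p q : lcp (of_lc p q) = p.
Proof. unfold lcp, of_lc; simpl; field. Qed.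

Lemma lc_inj x y : lcp x = lcp y -> lcq x = lcq y -> x = y.
Proof. destruct x as [a b], y as [c d]; unfold lcp, lcq; simpl; intros; f_equal; lra. Qed.

Lemma lor_lc x y : lor x y = - (lcp x * lcq y + lcq x * lcp y) / 2.
Proof. unfold lor, lcp, lcq. field. Qed.

Lemma lc_iter_Hs s m x :
  lcp (Nat.iter m (Hs s) x) = exp (INR m * s) * lcp x /\
  lcq (Nat.iter m (Hs s) x) = exp (- (INR m * s)) * lcq x.
Proof.
  induction m as [|m [IHp IHq]]; simpl Nat.iter.
  - rewrite Rmult_0_l, Ropp_0, exp_0. lra.
  - rewrite S_INR, Rmult_plus_distr_r, Rmult_1_l, Ropp_plus_distr, !exp_plus.
    rewrite (Rmult_comm (exp (INR m * s))), (Rmult_comm (exp (- (INR m * s)))),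
      !Rmult_assoc, <- IHp, <- IHq.
    set (y := Nat.iter m (Hs s) x).
    unfold lcp, lcq, Hs, cosh, sinh; simpl.
    rewrite exp_Ropp. pose proof (exp_pos s). split; field; lra.
Qed.

Lemma lc_Hpow t k x :
  lcp (Hpow t k x) = exp (IZR k * t) * lcp x /\
  lcq (Hpow t k x) = exp (- (IZR k * t)) * lcq x.
Proof.
  destruct k as [|m|m]; simpl Hpow.
  - rewrite Rmult_0_l, Ropp_0, exp_0. lra.
  - rewrite <- positive_nat_Z, <- INR_IZR_INZ. apply lc_iter_Hs.
  - rewrite <- Pos2Z.opp_pos, <- positive_nat_Z, opp_IZR, <- INR_IZR_INZ.
    replace (- INR (Pos.to_nat m) * t) with (INR (Pos.to_nat m) * - t) by ring.
    apply lc_iter_Hs.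
Qed.

Lemma Hpow_opp t k y : Hpow t k (Hpow t (- k) y) = y.
Proof.
  destruct (lc_Hpow t k (Hpow t (- k) y)) as [Ep Eq].
  destruct (lc_Hpow t (- k) y) as [Fp Fq].
  rewrite opp_IZR in Fp, Fq.
  apply lc_inj; [rewrite Ep, Fp | rewrite Eq, Fq]; rewrite <- Rmult_assoc, <- exp_plus;
    match goal with |- exp ?a * _ = _ => replace a with 0 by ring end;
    rewrite exp_0; ring.
Qed.

Lemma future_timelike_of_lc x : 0 < lcp x /\ 0 < lcq x -> future_timelike x.
Proof.
  intros [Hp Hq]. unfold future_timelike. rewrite lor_lc.
  unfold lcp, lcq in *. split; nra.
Qed.

Lemma lc_dist_bound z y :
  Rabs (lcp z - lcp y) <= 2 * dist2 z y /\ Rabs (lcq z - lcq y) <= 2 * dist2 z y.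
Proof.
  unfold dist2, lcp, lcq.
  set (a := fst z - fst y). set (b := snd z - snd y).
  assert (Ha : Rabs a <= sqrt (a ^ 2 + b ^ 2)).
  { rewrite <- sqrt_Rsqr_abs. apply sqrt_le_1_alt. unfold Rsqr. nra. }
  assert (Hb : Rabs b <= sqrt (a ^ 2 + b ^ 2)).
  { rewrite <- sqrt_Rsqr_abs. apply sqrt_le_1_alt. unfold Rsqr. nra. }
  replace (snd z + fst z - (snd y + fst y)) with (b + a) by (unfold a, b; ring).
  replace (snd z - fst z - (snd y - fst y)) with (b + - a) by (unfold a, b; ring).
  pose proof (Rabs_triang b a). pose proof (Rabs_triang b (- a)). rewrite Rabs_Ropp in *.
  lra.
Qed.

Lemma tconvex_polygon_convex t n eta h : convex_set (tconvex_polygon t n eta h).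
Proof.
  intros x y l Px Py Hl k i Hi. specialize (Px k i Hi). specialize (Py k i Hi).
  unfold halfplane in *. set (v := Hpow t k (eta i)) in *.
  replace (lor _ v) with ((1 - l) * lor x v + l * lor y v) by (unfold lor; simpl; ring).
  nra.
Qed.

Lemma finite_upper_bound (f : nat -> R) (m : nat) :
  exists M, 0 < M /\ forall i, (i < m)%nat -> f i <= M.
Proof.
  induction m as [|m [M [HM IH]]]; [exists 1; split; [lra | intros; lia]|].
  exists (Rmax M (f m)). split; [pose proof (Rmax_l M (f m)); lra|].
  intros i Hi. destruct (Nat.eq_dec i m) as [-> | Hne]; [apply Rmax_r|].
  apply (Rle_trans _ M); [apply IH; lia | apply Rmax_l].
Qed.

Lemma exp_le_compat x y : x <= y -> exp x <= exp y.
Proof. intros [Hlt | ->]; [left; apply exp_increasing, Hlt | apply Rle_refl]. Qed.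

Lemma exp_IZR_mul_cover t p : 0 < t -> 0 < p ->
  exists m : Z, exp (IZR m * t) <= p <= exp (IZR (m + 1) * t).
Proof.
  intros Ht Hp. set (y := ln p / t). destruct (archimed y) as [A1 A2].
  assert (E : exp (y * t) = p).
  { unfold y. replace (ln p / t * t) with (ln p) by (field; lra). apply exp_ln, Hp. }
  exists (up y - 1)%Z. rewrite <- E, plus_IZR, minus_IZR.
  split; apply exp_le_compat, Rmult_le_compat_r; lra.
Qed.

Lemma exp_IZR_mul_unbounded t M : 0 < t ->
  exists K : nat, forall k : Z, (Z.of_nat K <= k)%Z -> M <= exp (IZR k * t).
Proof.
  intros Ht. destruct (archimed (M / t)) as [Hup _].
  exists (Z.to_nat (up (M / t))). intros k Hk.
  assert (Hkt : M / t <= IZR k) by (apply Rlt_le, (Rlt_le_trans _ _ _ Hup), IZR_le; lia).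
  apply (Rmult_le_compat_r t) in Hkt; [|lra].
  replace (M / t * t) with M in Hkt by (field; lra).
  pose proof (exp_ineq1_le (IZR k * t)). lra.
Qed.

Definition aff := (R * R)%type.
Definition aeval (f : aff) (p : R) : R := fst f - snd f * p.
Definition asub (f g : aff) : aff := (fst f - fst g, snd f - snd g).

Lemma aeval_asub f g p : aeval (asub f g) p = aeval f p - aeval g p.
Proof. unfold aeval, asub; simpl; ring. Qed.

Lemma aeval_interpolate d a b p :
  (b - a) * aeval d p = (b - p) * aeval d a + (p - a) * aeval d b.
Proof. unfold aeval; ring. Qed.

Lemma aeval_nonneg_between d a b p :
  a < b -> 0 <= aeval d a -> 0 <= aeval d b -> a <= p <= b -> 0 <= aeval d p.
Proof. intros Hab Ha Hb Hp. pose proof (aeval_interpolate d a b p). nra. Qed.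

Lemma aeval_nonpos_between d a b p :
  a < b -> aeval d a <= 0 -> aeval d b <= 0 -> a <= p <= b -> aeval d p <= 0.
Proof. intros Hab Ha Hb Hp. pose proof (aeval_interpolate d a b p). nra. Qed.

Lemma aeval_root_between d a b :
  a < b -> aeval d a * aeval d b < 0 -> exists x, a < x < b /\ aeval d x = 0.
Proof.
  intros Hab Hs. set (da := aeval d a) in *. set (db := aeval d b) in *.
  assert (Hne : da - db <> 0) by nra.
  set (r := da / (da - db)).
  assert (Hr : r * (da - db) = da) by (unfold r; field; exact Hne).
  assert (Hr01 : 0 < r < 1).
  { destruct (Rlt_or_le 0 da); [assert (db < 0) | assert (0 < db)]; nra. }
  exists (a + (b - a) * r). split; [split; nra|].
  pose proof (aeval_interpolate d a b (a + (b - a) * r)) as E.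
  fold da db in E. apply (Rmult_eq_reg_l (b - a)); [|lra]. nra.
Qed.

Lemma aeval_sign_constant d u v :
  u < v -> 0 <= aeval d u * aeval d v ->
  (forall p, u <= p <= v -> 0 <= aeval d p) \/ (forall p, u <= p <= v -> aeval d p <= 0).
Proof.
  intros Huv Hs.
  destruct (Rle_or_lt 0 (aeval d u)) as [Hu | Hu];
    [destruct (Rle_or_lt 0 (aeval d v)) as [Hv | Hv] |]; [left | right | right]; intros p Hp.
  - apply (aeval_nonneg_between d u v); auto.
  - apply (aeval_nonpos_between d u v); auto; nra.
  - apply (aeval_nonpos_between d u v); auto; nra.
Qed.

Lemma aeval_gt_nbhd f z : lcq z < aeval f (lcp z) ->
  exists d, 0 < d /\ forall y, dist2 z y < d -> lcq y < aeval f (lcp y).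
Proof.
  intros Hz. set (g := aeval f (lcp z) - lcq z). set (s := Rabs (snd f)).
  assert (Hs : 0 <= s) by apply Rabs_pos.
  exists (g / (4 * (s + 1))). split; [apply Rdiv_lt_0_compat; unfold g; lra|].
  intros y Hy. destruct (lc_dist_bound z y) as [Dp Dq]. set (d := dist2 z y) in *.
  assert (Hd : d * (4 * (s + 1)) < g).
  { apply (Rmult_lt_compat_r (4 * (s + 1))) in Hy; [|lra].
    replace (g / (4 * (s + 1)) * (4 * (s + 1))) with g in Hy by (field; lra). lra. }
  assert (Hslope : Rabs (snd f * (lcp y - lcp z)) <= s * (2 * d)).
  { rewrite Rabs_mult, Rabs_minus_sym.
    apply Rmult_le_compat; try apply Rabs_pos; [apply Rle_refl | lra]. }
  assert (Hd0 : 0 <= d) by apply sqrt_pos.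
  assert (Hsd : s * (2 * d) + 2 * d < g) by nra.
  pose proof (Rle_abs (snd f * (lcp y - lcp z))).
  pose proof (Rle_abs (lcq y - lcq z)). rewrite Rabs_minus_sym in Dq.
  unfold g, aeval in *. lra.
Qed.

Definition dominates_on (L : list aff) (f : aff) (a b : R) : Prop :=
  forall p, a <= p <= b -> forall g, In g L -> aeval g p <= aeval f p.

Inductive envelope_chain (L : list aff) : R -> list (R * aff) -> R -> Prop :=
| envelope_chain_nil a : envelope_chain L a nil a
| envelope_chain_cons a w f rest b : a < w -> In f L -> dominates_on L f a w ->
    envelope_chain L w rest b -> envelope_chain L a ((w, f) :: rest) b.

Lemma dominates_on_sub L f a b a' b' :
  a <= a' -> b' <= b -> dominates_on L f a b -> dominates_on L f a' b'.
Proof. intros Ha Hb D p Hp. apply D. lra. Qed.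

Lemma envelope_refine_onesided L f g a w rest b :
  a < w -> In g L -> dominates_on L g a w ->
  ((forall p, a <= p <= w -> 0 <= aeval (asub f g) p) \/
   (forall p, a <= p <= w -> aeval (asub f g) p <= 0)) ->
  envelope_chain (f :: L) w rest b ->
  exists segs, envelope_chain (f :: L) a (segs ++ rest) b.
Proof.
  intros Haw Hg D [Hf | Hg'] C.
  - exists ((w, f) :: nil). constructor; auto; [left; auto|].
    intros p Hp k [<- | Hk]; [lra|].
    specialize (Hf p Hp). rewrite aeval_asub in Hf. specialize (D p Hp k Hk). lra.
  - exists ((w, g) :: nil). constructor; auto; [right; auto|].
    intros p Hp k [<- | Hk]; [|apply D; auto].
    specialize (Hg' p Hp). rewrite aeval_asub in Hg'. lra.
Qed.

(* Adding [f] to [L] splits a piece dominated by [g] at most once: where [f - g] changes sign. *)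
Lemma envelope_refine_piece L f g a w rest b :
  a < w -> In g L -> dominates_on L g a w -> envelope_chain (f :: L) w rest b ->
  exists segs, envelope_chain (f :: L) a (segs ++ rest) b.
Proof.
  intros Haw Hg D C.
  destruct (Rlt_or_le (aeval (asub f g) a * aeval (asub f g) w) 0) as [Hs | Hs].
  - destruct (aeval_root_between _ a w Haw Hs) as [x [Hx H0]].
    destruct (envelope_refine_onesided L f g x w rest b) as [segs2 C2]; auto; try lra.
    { apply (dominates_on_sub L g a w); auto; lra. }
    { apply aeval_sign_constant; [lra|]. rewrite H0. lra. }
    destruct (envelope_refine_onesided L f g a x (segs2 ++ rest) b) as [segs1 C1]; auto; try lra.
    { apply (dominates_on_sub L g a w); auto; lra. }
    { apply aeval_sign_constant; [lra|]. rewrite H0. lra. }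
    exists (segs1 ++ segs2). rewrite <- app_assoc. exact C1.
  - apply (envelope_refine_onesided L f g a w); auto. apply aeval_sign_constant; auto.
Qed.

Lemma envelope_chain_extend L f a segs b :
  envelope_chain L a segs b -> exists segs', envelope_chain (f :: L) a segs' b.
Proof.
  induction 1 as [a | a w g rest b Haw Hg D C [segs' C']].
  - exists nil. constructor.
  - destruct (envelope_refine_piece L f g a w segs' b Haw Hg D C') as [s S]. eauto.
Qed.

Lemma envelope_chain_exists L a b :
  L <> nil -> a < b -> exists segs, envelope_chain L a segs b.
Proof.
  intros HL Hab. induction L as [|g [|g' L'] IH]; [congruence| |].
  - exists ((b, g) :: nil). constructor; auto; [left; auto| |constructor].
    intros p Hp k [<- | []]. lra.
  - destruct (IH ltac:(discriminate)) as [s C]. eapply envelope_chain_extend; eauto.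
Qed.

Lemma envelope_chain_le L a segs b : envelope_chain L a segs b -> a <= b.
Proof. induction 1; lra. Qed.

Lemma envelope_chain_breakpoints L a segs b : envelope_chain L a segs b ->
  exists (w : nat -> R) (psi : nat -> aff), w 0%nat = a /\ w (length segs) = b /\
    forall r, (r < length segs)%nat ->
      a <= w r /\ w r < w (S r) /\ w (S r) <= b /\
      In (psi r) L /\ dominates_on L (psi r) (w r) (w (S r)).
Proof.
  induction 1 as [a | a w f rest b Haw Hf D C [w' [psi' [H0 [HN H]]]]].
  - exists (fun _ => a), (fun _ => (0, 0)). simpl. repeat split; intros; lia.
  - exists (fun r => match r with O => a | S r' => w' r' end),
           (fun r => match r with O => f | S r' => psi' r' end).
    split; [reflexivity|]. split; [exact HN|].
    intros [|r] Hr; simpl in Hr |- *.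
    + rewrite H0. pose proof (envelope_chain_le L w rest b C). split; [lra | tauto].
    + destruct (H r ltac:(lia)) as [H1 [H2 [H3 H4]]]. split; [lra | tauto].
Qed.

Lemma upper_envelope_pieces L a b : L <> nil -> a < b ->
  exists N (w : nat -> R) (psi : nat -> aff), (1 <= N)%nat /\ w 0%nat = a /\ w N = b /\
    forall r, (r < N)%nat ->
      a <= w r /\ w r < w (S r) /\ w (S r) <= b /\
      In (psi r) L /\ dominates_on L (psi r) (w r) (w (S r)).
Proof.
  intros HL Hab. destruct (envelope_chain_exists L a b HL Hab) as [segs C].
  destruct (envelope_chain_breakpoints L a segs b C) as [w [psi [H0 [HN H]]]].
  exists (length segs), w, psi. split; [|auto].
  destruct segs; [simpl in HN; lra | simpl; lia].
Qed.

Lemma segment_graph_iff f a b z : a < b ->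
  segment (of_lc a (aeval f a)) (of_lc b (aeval f b)) z <->
  a <= lcp z <= b /\ lcq z = aeval f (lcp z).
Proof.
  intros Hab. unfold segment. split.
  - intros [l [Hl ->]].
    assert (Hp : lcp ((1 - l) * fst (of_lc a (aeval f a)) + l * fst (of_lc b (aeval f b)),
                       (1 - l) * snd (of_lc a (aeval f a)) + l * snd (of_lc b (aeval f b)))
                 = (1 - l) * a + l * b) by (unfold lcp, of_lc; simpl; field).
    rewrite Hp. split; [split; nra|].
    unfold lcq, of_lc, aeval; simpl. field.
  - intros [Hz Hq]. exists ((lcp z - a) / (b - a)). split.
    + split; [apply Rmult_le_pos; [lra | left; apply Rinv_0_lt_compat; lra]|].
      apply (Rmult_le_reg_r (b - a)); [lra|]. unfold Rdiv.
      rewrite Rmult_assoc, Rinv_l by lra. lra.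
    + apply lc_inj; unfold lcp, lcq, of_lc, aeval in *; simpl in *; [field; lra|].
      rewrite Hq. field. lra.
Qed.

Lemma Z_increasing_lt (f : Z -> R) :
  (forall j, f j < f (j + 1)%Z) -> forall j1 j2, (j1 < j2)%Z -> f j1 < f j2.
Proof.
  intros Hf j1 j2 Hj.
  replace j2 with (j1 + 1 + Z.of_nat (Z.to_nat (j2 - j1 - 1)))%Z by lia.
  induction (Z.to_nat (j2 - j1 - 1)) as [|m IH].
  - rewrite Z.add_0_r. apply Hf.
  - rewrite Nat2Z.inj_succ, <- Z.add_1_r, Z.add_assoc. specialize (Hf (j1 + 1 + Z.of_nat m)%Z). lra.
Qed.

Lemma polygonal_of_graph_pieces (B : pt -> Prop) (G : R -> R -> Prop)
    (pv : Z -> R) (phi : Z -> aff) :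
  (forall z, boundary B z <-> G (lcp z) (lcq z)) ->
  (forall p q q', G p q -> G p q' -> q = q') ->
  (forall j, pv j < pv (j + 1)%Z) ->
  (forall j p, pv j <= p <= pv (j + 1)%Z -> G p (aeval (phi j) p)) ->
  (forall p q, G p q -> exists j, pv j <= p <= pv (j + 1)%Z) ->
  bounded_by_countable_polygonal_line B.
Proof.
  intros HB Huniq Hinc Hpiece Hcov.
  set (v := fun j => of_lc (pv j) (aeval (phi j) (pv j))).
  assert (Hjoint : forall j, v (j + 1)%Z = of_lc (pv (j + 1)%Z) (aeval (phi j) (pv (j + 1)%Z))).
  { intro j. unfold v. f_equal. apply (Huniq (pv (j + 1)%Z)); apply Hpiece;
      pose proof (Hinc j); pose proof (Hinc (j + 1)%Z); lra. }
  exists v. split.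
  - intros j1 j2 E. apply (f_equal lcp) in E. unfold v in E. rewrite !lcp_of_lc in E.
    destruct (Z.lt_trichotomy j1 j2) as [L | [L | L]]; auto;
      pose proof (Z_increasing_lt pv Hinc _ _ L); lra.
  - intro z. rewrite HB. split.
    + intros Gz. destruct (Hcov _ _ Gz) as [j Hj]. exists j.
      rewrite Hjoint. apply segment_graph_iff; [apply Hinc|]. split; auto.
      apply (Huniq (lcp z)); auto.
    + intros [j Hs]. rewrite Hjoint in Hs. apply segment_graph_iff in Hs; [|apply Hinc].
      destruct Hs as [Hj ->]. apply Hpiece; auto.
Qed.

Lemma increasing_cover (w : nat -> R) N : (1 <= N)%nat ->
  (forall r, (r < N)%nat -> w r < w (S r)) ->
  forall x, w 0%nat <= x <= w N -> exists r, (r < N)%nat /\ w r <= x <= w (S r).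
Proof.
  intros HN Hw x Hx. induction N as [|N IH]; [lia|].
  destruct (Rle_or_lt x (w N)) as [Hle | Hlt]; [destruct (Nat.eq_dec N 0) as [-> | HN0] |].
  - exists 0%nat. split; [lia | lra].
  - destruct IH as [r [Hr Hr']]; [lia | intros r Hr; apply Hw; lia | lra |].
    exists r. split; [lia | auto].
  - exists N. split; [lia | lra].
Qed.

Lemma Z_divmod_succ j N : (0 < N)%Z ->
  ((j + 1) mod N = j mod N + 1 /\ (j + 1) / N = j / N)%Z \/
  (j mod N + 1 = N /\ (j + 1) mod N = 0 /\ (j + 1) / N = j / N + 1)%Z.
Proof.
  intros HN. pose proof (Z.mod_pos_bound j N HN). pose proof (Z.div_mod j N ltac:(lia)).
  destruct (Z.eq_dec (j mod N + 1) N) as [E | E]; [right | left].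
  - split; [auto|]. split.
    + symmetry. apply (Z.mod_unique_pos _ _ (j / N + 1)); lia.
    + symmetry. apply (Z.div_unique_pos _ _ _ 0); lia.
  - split.
    + symmetry. apply (Z.mod_unique_pos _ _ (j / N)); lia.
    + symmetry. apply (Z.div_unique_pos _ _ _ (j mod N + 1)); lia.
Qed.

Definition ascale (c : R) (f : aff) : aff := (fst f / c, snd f / c ^ 2).

Lemma aeval_ascale c f p : c <> 0 -> aeval (ascale c f) (c * p) = aeval f p / c.
Proof. intros Hc. unfold aeval, ascale; simpl. field. auto. Qed.

Section PeriodicPieces.

Variables (G : R -> R -> Prop) (E : Z -> R) (N : nat) (w : nat -> R) (psi : nat -> aff).
Hypothesis E_pos : forall m, 0 < E m.
Hypothesis E_succ : forall m, E (m + 1)%Z = E m * w N.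
Hypothesis G_scale : forall m p q, G p q -> G (E m * p) (q / E m).
Hypothesis E_cover : forall p, 0 < p -> exists m, E m <= p <= E (m + 1)%Z.
Hypothesis N_pos : (1 <= N)%nat.
Hypothesis w_0 : w 0%nat = 1.
Hypothesis w_incr : forall r, (r < N)%nat -> w r < w (S r).
Hypothesis psi_piece :
  forall r, (r < N)%nat -> forall p, w r <= p <= w (S r) -> G p (aeval (psi r) p).

Let NZ := Z.of_nat N.
Let period j := (j / NZ)%Z.
Let slot j := Z.to_nat (j mod NZ).
Let pv j := E (period j) * w (slot j).

Lemma slot_lt j : (slot j < N)%nat.
Proof.
  unfold slot. pose proof (Z.mod_pos_bound j NZ ltac:(unfold NZ; lia)). unfold NZ in *. lia.
Qed.

Lemma pv_succ j : pv (j + 1)%Z = E (period j) * w (S (slot j)).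
Proof.
  unfold pv, period, slot. pose proof (Z.mod_pos_bound j NZ ltac:(unfold NZ; lia)).
  destruct (Z_divmod_succ j NZ ltac:(unfold NZ; lia)) as [[Hm Hd] | [Hl [Hm Hd]]];
    rewrite Hm, Hd.
  - do 2 f_equal. lia.
  - rewrite E_succ. simpl Z.to_nat. rewrite w_0, Rmult_1_r. do 2 f_equal. unfold NZ in *. lia.
Qed.

Lemma periodic_pieces : exists (pv : Z -> R) (phi : Z -> aff),
  (forall j, pv j < pv (j + 1)%Z) /\
  (forall j p, pv j <= p <= pv (j + 1)%Z -> G p (aeval (phi j) p)) /\
  (forall p, 0 < p -> exists j, pv j <= p <= pv (j + 1)%Z).
Proof.
  exists pv, (fun j => ascale (E (period j)) (psi (slot j))). split; [|split].
  - intro j. rewrite pv_succ. apply Rmult_lt_compat_l; auto. apply w_incr, slot_lt.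
  - intros j p Hp. rewrite pv_succ in Hp. unfold pv in Hp.
    set (c := E (period j)) in *. pose proof (E_pos (period j)) as Hc. fold c in Hc.
    replace p with (c * (p / c)) by (field; lra).
    rewrite aeval_ascale by lra. apply G_scale, psi_piece; [apply slot_lt|].
    split; apply (Rmult_le_reg_l c); auto; replace (c * (p / c)) with p by (field; lra); lra.
  - intros p Hp. destruct (E_cover p Hp) as [m Hm]. pose proof (E_pos m).
    rewrite E_succ in Hm.
    destruct (increasing_cover w N N_pos w_incr (p / E m)) as [r [Hr Hpr]].
    { rewrite w_0. split; apply (Rmult_le_reg_l (E m)); auto;
        replace (E m * (p / E m)) with p by (field; lra); lra. }
    exists (NZ * m + Z.of_nat r)%Z. rewrite pv_succ. unfold pv, period, slot.
    replace ((NZ * m + Z.of_nat r) / NZ)%Z with m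
      by (apply (Z.div_unique_pos _ _ _ (Z.of_nat r)); unfold NZ; lia).
    replace ((NZ * m + Z.of_nat r) mod NZ)%Z with (Z.of_nat r)
      by (apply (Z.mod_unique_pos _ _ m); unfold NZ; lia).
    rewrite Nat2Z.id.
    split; apply (Rmult_le_reg_l (/ E m)); try (apply Rinv_0_lt_compat; lra);
      rewrite <- Rmult_assoc, Rinv_l, Rmult_1_l by lra; unfold Rdiv in Hpr;
      rewrite Rmult_comm; lra.
Qed.

End PeriodicPieces.

Section TConvexPolygon.

Variables (t : R) (n : nat) (eta : nat -> pt) (h : nat -> R).
Hypothesis t_pos : 0 < t.
Hypothesis n_pos : (1 <= n)%nat.
Hypothesis eta_H : forall i, (i < n)%nat -> in_H (eta i).
Hypothesis h_pos : forall i, (i < n)%nat -> 0 < h i.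

(* [tangent_param i k = 1 / lcp (Hpow t k (eta i))]; [tangent i k] is tangent to the
   hyperbola [p q = (h i)^2]. *)
Definition tangent_param (i : nat) (k : Z) : R := exp (- (IZR k * t)) / lcp (eta i).
Definition tangent (i : nat) (k : Z) : aff :=
  (2 * h i * tangent_param i k, tangent_param i k ^ 2).

Definition below_tangents (p q : R) : Prop :=
  forall i k, (i < n)%nat -> aeval (tangent i k) p <= q.

Definition on_envelope (p q : R) : Prop :=
  0 < p /\ below_tangents p q /\
  forall e, 0 < e -> exists i k, (i < n)%nat /\ q - e < aeval (tangent i k) p.

Lemma lc_eta i : (i < n)%nat -> 0 < lcp (eta i) /\ lcp (eta i) * lcq (eta i) = 1.
Proof.
  intros Hi. destruct (eta_H i Hi) as [H1 H2]. rewrite lor_lc in H1.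
  assert (lcp (eta i) + lcq (eta i) > 0) by (unfold lcp, lcq; lra).
  split; nra.
Qed.

Lemma tangent_param_pos i k : (i < n)%nat -> 0 < tangent_param i k.
Proof.
  intros Hi. apply Rdiv_lt_0_compat; [apply exp_pos | apply lc_eta; auto].
Qed.

Lemma halfplane_iff_tangent i k x : (i < n)%nat ->
  halfplane t k (eta i) (h i) x <-> aeval (tangent i k) (lcp x) <= lcq x.
Proof.
  intros Hi. unfold halfplane.
  assert (Key : aeval (tangent i k) (lcp x) - lcq x
                = (2 * h i + 2 * lor x (Hpow t k (eta i))) * tangent_param i k).
  { destruct (lc_eta i Hi) as [HP HPQ]. destruct (lc_Hpow t k (eta i)) as [Ep Eq].
    rewrite lor_lc, Ep, Eq. unfold tangent, aeval, tangent_param. simpl. rewrite exp_Ropp.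
    pose proof (exp_pos (IZR k * t)).
    replace (lcq (eta i)) with (/ lcp (eta i)) by (field_simplify_eq; lra).
    field. lra. }
  pose proof (tangent_param_pos i k Hi). split; intros; nra.
Qed.

Lemma tconvex_polygon_iff x :
  tconvex_polygon t n eta h x <-> below_tangents (lcp x) (lcq x).
Proof.
  split; intros H i k Hi; apply halfplane_iff_tangent; auto.
Qed.

Lemma tangent_param_ge_uniform M : exists K : nat,
  forall i k, (i < n)%nat -> (k <= - Z.of_nat K)%Z -> M <= tangent_param i k.
Proof.
  destruct (finite_upper_bound (fun i => lcp (eta i)) n) as [Pm [HPm HP]].
  destruct (exp_IZR_mul_unbounded t (Rabs M * Pm) t_pos) as [K HK].
  exists K. intros i k Hi Hk.
  specialize (HK (- k)%Z ltac:(lia)). rewrite opp_IZR in HK.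
  destruct (lc_eta i Hi) as [HPi _]. specialize (HP i Hi). simpl in HP.
  unfold tangent_param. replace (- (IZR k * t)) with (- IZR k * t) by ring.
  apply (Rle_trans _ (Rabs M)); [apply Rle_abs|].
  apply (Rmult_le_reg_r (lcp (eta i))); auto. unfold Rdiv.
  rewrite Rmult_assoc, Rinv_l, Rmult_1_r by lra.
  apply (Rle_trans _ (Rabs M * Pm)); auto.
  apply Rmult_le_compat_l; [apply Rabs_pos | auto].
Qed.

Lemma tangent_param_le_uniform eps : 0 < eps -> exists K : nat,
  forall i k, (i < n)%nat -> (Z.of_nat K <= k)%Z -> tangent_param i k <= eps.
Proof.
  intros He.
  destruct (finite_upper_bound (fun i => lcq (eta i)) n) as [Qm [HQm HQ]].
  destruct (exp_IZR_mul_unbounded t (Qm / eps) t_pos) as [K HK].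
  exists K. intros i k Hi Hk. specialize (HK k Hk).
  destruct (lc_eta i Hi) as [HPi HPQ]. specialize (HQ i Hi). simpl in HQ.
  unfold tangent_param. rewrite exp_Ropp. set (c := exp (IZR k * t)) in *.
  assert (0 < c) by apply exp_pos.
  replace (/ c / lcp (eta i)) with (lcq (eta i) / c) by (field_simplify_eq; lra).
  apply (Rmult_le_reg_r c); auto. unfold Rdiv. rewrite Rmult_assoc, Rinv_l by lra.
  apply (Rmult_le_compat_r eps) in HK; [|lra].
  replace (Qm / eps * eps) with Qm in HK by (field; lra). lra.
Qed.

Lemma tangent_shift i k m : (i < n)%nat ->
  tangent i (k + m) = ascale (exp (IZR m * t)) (tangent i k).
Proof.
  intros Hi. destruct (lc_eta i Hi) as [HP _]. pose proof (exp_pos (IZR m * t)).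
  unfold tangent, ascale, tangent_param; simpl. rewrite plus_IZR, Rmult_plus_distr_r,
    Ropp_plus_distr, exp_plus, (exp_Ropp (IZR m * t)).
  f_equal; field; lra.
Qed.

Lemma aeval_tangent_shift i k m p : (i < n)%nat ->
  aeval (tangent i (k + m)) (exp (IZR m * t) * p) = aeval (tangent i k) p / exp (IZR m * t).
Proof.
  intros Hi. rewrite tangent_shift by auto. apply aeval_ascale.
  pose proof (exp_pos (IZR m * t)). lra.
Qed.

Lemma below_tangents_scale m p q :
  below_tangents p q -> below_tangents (exp (IZR m * t) * p) (q / exp (IZR m * t)).
Proof.
  intros C i k Hi. pose proof (exp_pos (IZR m * t)).
  replace k with ((k - m) + m)%Z by ring. rewrite aeval_tangent_shift by auto.
  apply Rmult_le_compat_r; [left; apply Rinv_0_lt_compat; auto | apply C; auto].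
Qed.

Lemma on_envelope_scale m p q :
  on_envelope p q -> on_envelope (exp (IZR m * t) * p) (q / exp (IZR m * t)).
Proof.
  intros [Hp [C S]]. set (c := exp (IZR m * t)). assert (Hc : 0 < c) by apply exp_pos.
  split; [apply Rmult_lt_0_compat; auto|]. split; [apply below_tangents_scale; auto|].
  intros e He. destruct (S (e * c) ltac:(apply Rmult_lt_0_compat; auto)) as [i [k [Hi Hl]]].
  exists i, (k + m)%Z. split; auto. rewrite aeval_tangent_shift by auto. fold c.
  apply (Rmult_lt_reg_r c); auto.
  replace ((q / c - e) * c) with (q - e * c) by (field; lra).
  replace (aeval (tangent i k) p / c * c) with (aeval (tangent i k) p) by (field; lra).
  exact Hl.
Qed.

Lemma below_tangents_pos p q : below_tangents p q -> 0 < p /\ 0 < q.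
Proof.
  intros C. assert (H0 : (0 < n)%nat) by lia. pose proof (h_pos 0 H0) as Hh0.
  assert (Hp : 0 < p).
  { destruct (Rlt_or_le 0 p) as [Hp | Hp]; auto.
    destruct (tangent_param_ge_uniform (Rabs q / (2 * h 0%nat) + 1)) as [K HK].
    specialize (HK 0%nat (- Z.of_nat K)%Z H0 ltac:(lia)).
    specialize (C 0%nat (- Z.of_nat K)%Z H0). unfold tangent, aeval in C; simpl in C.
    set (v := tangent_param 0 (- Z.of_nat K)) in *.
    assert (Hq : Rabs q < 2 * h 0%nat * v).
    { apply (Rmult_le_compat_l (2 * h 0%nat)) in HK; [|lra].
      replace (2 * h 0%nat * (Rabs q / (2 * h 0%nat) + 1)) with (Rabs q + 2 * h 0%nat)
        in HK by (field; lra). lra. }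
    pose proof (Rle_abs q). assert (0 <= v ^ 2 * - p) by (apply Rmult_le_pos; nra). nra. }
  split; auto.
  destruct (tangent_param_le_uniform (h 0%nat / p) ltac:(apply Rdiv_lt_0_compat; lra)) as [K HK].
  specialize (HK 0%nat (Z.of_nat K) H0 (Z.le_refl _)).
  specialize (C 0%nat (Z.of_nat K) H0). unfold tangent, aeval in C; simpl in C.
  pose proof (tangent_param_pos 0 (Z.of_nat K) H0). set (v := tangent_param 0 (Z.of_nat K)) in *.
  apply (Rmult_le_compat_r p) in HK; [|lra].
  replace (h 0%nat / p * p) with (h 0%nat) in HK by (field; lra). nra.
Qed.

(* Tangents with a large parameter are negative near [z]; the others have bounded slope. *)
Lemma strict_tangents_nbhd z e : below_tangents (lcp z) (lcq z) -> 0 < e ->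
  (forall i k, (i < n)%nat -> aeval (tangent i k) (lcp z) <= lcq z - e) ->
  exists d, 0 < d /\ forall y, dist2 z y < d -> below_tangents (lcp y) (lcq y).
Proof.
  intros C He Hle. destruct (below_tangents_pos _ _ C) as [Hp0 Hq0].
  destruct (finite_upper_bound h n) as [Hm [HHm HHb]].
  set (p0 := lcp z) in *. set (q0 := lcq z) in *.
  set (c := (4 * Hm / p0) ^ 2). assert (Hc : 0 <= c) by apply pow2_ge_0.
  set (d := Rmin (p0 / 4) (Rmin (q0 / 4) (e / (2 + 2 * c)))).
  assert (Hd1 : d <= p0 / 4) by apply Rmin_l.
  assert (Hd2 : d <= q0 / 4) by (eapply Rle_trans; [apply Rmin_r | apply Rmin_l]).
  assert (Hd3 : d * (2 + 2 * c) <= e).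
  { assert (d <= e / (2 + 2 * c)) by (eapply Rle_trans; [apply Rmin_r | apply Rmin_r]).
    apply (Rmult_le_compat_r (2 + 2 * c)) in H; [|lra].
    replace (e / (2 + 2 * c) * (2 + 2 * c)) with e in H by (field; lra). lra. }
  exists d. split.
  { unfold d. repeat apply Rmin_pos; try lra. apply Rdiv_lt_0_compat; lra. }
  intros y Hy i k Hi.
  destruct (lc_dist_bound z y) as [Dp Dq]. fold p0 q0 in Dp, Dq.
  pose proof (Rle_abs (p0 - lcp y)). pose proof (Rle_abs (q0 - lcq y)).
  pose proof (Rle_abs (lcp y - p0)). rewrite Rabs_minus_sym in H1.
  set (dy := dist2 z y) in *.
  specialize (Hle i k Hi). unfold tangent, aeval in *; simpl in *.
  pose proof (tangent_param_pos i k Hi). set (v := tangent_param i k) in *.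
  specialize (HHb i Hi). pose proof (h_pos i Hi).
  destruct (Rle_or_lt (2 * h i) (v * (p0 / 2))) as [Hbig | Hsmall].
  - assert (v * lcp y >= 2 * h i) by nra. nra.
  - assert (Hv : v < 4 * Hm / p0).
    { apply (Rmult_lt_reg_r (p0 / 2)); [lra|].
      replace (4 * Hm / p0 * (p0 / 2)) with (2 * Hm) by (field; lra). lra. }
    assert (Hv2 : v ^ 2 <= c) by (unfold c; simpl; nra).
    assert (v ^ 2 * (p0 - lcp y) <= c * (2 * d)).
    { apply (Rle_trans _ (v ^ 2 * Rabs (p0 - lcp y))).
      - apply Rmult_le_compat_l; [apply pow2_ge_0 | apply Rle_abs].
      - apply Rmult_le_compat; try apply pow2_ge_0; try apply Rabs_pos; lra. }
    lra.
Qed.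

Lemma not_below_tangents p q : ~ below_tangents p q ->
  exists i k, (i < n)%nat /\ q < aeval (tangent i k) p.
Proof.
  intros HC. apply NNPP. intro HN. apply HC. intros i k Hi.
  apply Rnot_lt_le. intro Hlt. apply HN. eauto.
Qed.

Lemma boundary_iff_on_envelope z :
  boundary (tconvex_polygon t n eta h) z <-> on_envelope (lcp z) (lcq z).
Proof.
  split.
  - intros B.
    assert (C : below_tangents (lcp z) (lcq z)).
    { apply NNPP. intro HC. destruct (not_below_tangents _ _ HC) as [i [k [Hi Hz]]].
      destruct (aeval_gt_nbhd _ z Hz) as [d [Hd Hout]].
      destruct (B d Hd) as [[y [Py Dy]] _]. apply tconvex_polygon_iff in Py.
      specialize (Py i k Hi). specialize (Hout y Dy). lra. }
    split; [apply (below_tangents_pos _ _ C)|]. split; auto.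
    intros e He. apply NNPP. intro HN.
    destruct (strict_tangents_nbhd z e C He) as [d [Hd Hin]].
    { intros i k Hi. apply Rnot_lt_le. intro Hlt. apply HN. exists i, k. split; [auto | lra]. }
    destruct (B d Hd) as [_ [y [NPy Dy]]]. apply NPy, tconvex_polygon_iff. auto.
  - intros [Hp [C S]] e He. split.
    + exists z. split; [apply tconvex_polygon_iff; auto|].
      unfold dist2. rewrite !Rminus_diag. replace (0 ^ 2 + 0 ^ 2) with 0 by ring.
      rewrite sqrt_0. lra.
    + exists (fst z + e / 4, snd z - e / 4). split.
      * rewrite tconvex_polygon_iff. intro HP.
        destruct (S (e / 2) ltac:(lra)) as [i [k [Hi Hl]]]. specialize (HP i k Hi).
        unfold lcp, lcq in *. simpl in HP.
        replace (snd z - e / 4 + (fst z + e / 4)) with (snd z + fst z) in HP by ring. lra.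
      * unfold dist2. simpl.
        replace ((fst z - (fst z + e / 4)) ^ 2 + (snd z - (snd z - e / 4)) ^ 2)
          with ((e / 4) ^ 2 * 2) by ring.
        apply Rlt_le_trans with (sqrt (e ^ 2)); [apply sqrt_lt_1_alt; split; nra|].
        rewrite sqrt_pow2; lra.
Qed.

Lemma on_envelope_unique p q q' : on_envelope p q -> on_envelope p q' -> q = q'.
Proof.
  intros [_ [C1 S1]] [_ [C2 S2]].
  destruct (Rtotal_order q q') as [L | [L | L]]; auto; exfalso.
  - destruct (S2 (q' - q) ltac:(lra)) as [i [k [Hi Hl]]]. specialize (C1 i k Hi). lra.
  - destruct (S1 (q - q') ltac:(lra)) as [i [k [Hi Hl]]]. specialize (C2 i k Hi). lra.
Qed.

(* On [[1, exp t]] only the tangents with [|k| <= K] matter: those with large [k] stay below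
   one fixed positive tangent, those with very negative [k] are negative there. *)
Lemma far_tangents_dominated : exists (K : nat) (k0 : Z), (- Z.of_nat K <= k0 <= Z.of_nat K)%Z /\
  forall p, 1 <= p <= exp t -> forall i k, (i < n)%nat ->
    (- Z.of_nat K <= k <= Z.of_nat K)%Z \/ aeval (tangent i k) p <= aeval (tangent 0 k0) p.
Proof.
  assert (H0 : (0 < n)%nat) by lia. pose proof (h_pos 0 H0) as Hh0.
  set (b := exp t). assert (Hb : 0 < b) by apply exp_pos.
  destruct (tangent_param_le_uniform (h 0%nat / b) ltac:(apply Rdiv_lt_0_compat; lra)) as [K0 HK0].
  set (k0 := Z.of_nat K0). pose proof (tangent_param_pos 0 k0 H0) as Hu0.
  set (u0 := tangent_param 0 k0) in *.
  assert (Hu0b : u0 * b <= h 0%nat).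
  { specialize (HK0 0%nat k0 H0 (Z.le_refl _)). fold u0 in HK0.
    apply (Rmult_le_compat_r b) in HK0; [|lra].
    replace (h 0%nat / b * b) with (h 0%nat) in HK0 by (field; lra). lra. }
  set (m0 := u0 * h 0%nat). assert (Hm0 : 0 < m0) by (unfold m0; nra).
  assert (Href : forall p, 1 <= p <= b -> m0 <= aeval (tangent 0 k0) p).
  { intros p Hp. unfold tangent, aeval, m0; simpl. fold u0.
    assert (u0 * p <= u0 * b) by (apply Rmult_le_compat_l; lra). nra. }
  destruct (finite_upper_bound h n) as [Hm [HHm HHb]].
  destruct (tangent_param_le_uniform (m0 / (2 * Hm)) ltac:(apply Rdiv_lt_0_compat; lra))
    as [K1 HK1].
  destruct (tangent_param_ge_uniform (2 * Hm)) as [K2 HK2].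
  set (K := Nat.max K0 (Nat.max K1 K2)).
  exists K, k0. split; [unfold k0, K; lia|].
  intros p Hp i k Hi.
  destruct (Z_le_gt_dec (- Z.of_nat K) k) as [Hk1 | Hk1];
    [destruct (Z_le_gt_dec k (Z.of_nat K)) as [Hk2 | Hk2] |]; [left; lia | right | right];
    specialize (Href p Hp); pose proof (tangent_param_pos i k Hi); specialize (HHb i Hi);
    pose proof (h_pos i Hi); unfold tangent, aeval in *; cbn [fst snd] in *;
    set (v := tangent_param i k) in *.
  - specialize (HK1 i k Hi ltac:(unfold K in *; lia)). fold v in HK1.
    apply (Rmult_le_compat_l (2 * Hm)) in HK1; [|lra].
    replace (2 * Hm * (m0 / (2 * Hm))) with m0 in HK1 by (field; lra).
    assert (0 <= v ^ 2 * p) by (apply Rmult_le_pos; [apply pow2_ge_0 | lra]).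
    assert (h i * v <= Hm * v) by (apply Rmult_le_compat_r; lra). lra.
  - specialize (HK2 i k Hi ltac:(unfold K in *; lia)). fold v in HK2.
    assert (v <= v * p) by (rewrite <- (Rmult_1_r v) at 1; apply Rmult_le_compat_l; lra).
    assert (2 * h i * v <= v ^ 2 * p) by nra. lra.
Qed.

Definition tangents (K : nat) : list aff :=
  flat_map (fun i => map (fun j => tangent i (Z.of_nat j - Z.of_nat K)) (seq 0 (2 * K + 1)))
    (seq 0 n).

Lemma In_tangents K i k : (i < n)%nat -> (- Z.of_nat K <= k <= Z.of_nat K)%Z ->
  In (tangent i k) (tangents K).
Proof.
  intros Hi Hk. apply in_flat_map. exists i. split; [apply in_seq; lia|].
  apply in_map_iff. exists (Z.to_nat (k + Z.of_nat K)). split.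
  - f_equal. lia.
  - apply in_seq. lia.
Qed.

Lemma tangents_In K f : In f (tangents K) -> exists i k, (i < n)%nat /\ f = tangent i k.
Proof.
  intros Hf. apply in_flat_map in Hf. destruct Hf as [i [Hi Hf]].
  apply in_map_iff in Hf. destruct Hf as [j [<- _]]. apply in_seq in Hi.
  exists i, (Z.of_nat j - Z.of_nat K)%Z. split; [lia | auto].
Qed.

Lemma envelope_pieces : exists N (w : nat -> R) (psi : nat -> aff),
  (1 <= N)%nat /\ w 0%nat = 1 /\ w N = exp t /\
  forall r, (r < N)%nat -> w r < w (S r) /\
    forall p, w r <= p <= w (S r) -> on_envelope p (aeval (psi r) p).
Proof.
  destruct far_tangents_dominated as [K [k0 [Hk0 Hfar]]].
  assert (H0 : (0 < n)%nat) by lia.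
  assert (Hb : 1 < exp t) by (rewrite <- exp_0; apply exp_increasing; lra).
  assert (HL : tangents K <> nil).
  { intro E. pose proof (In_tangents K 0 0 H0 ltac:(lia)) as HI. rewrite E in HI. destruct HI. }
  destruct (upper_envelope_pieces (tangents K) 1 (exp t) HL Hb)
    as [N [w [psi [HN [Hw0 [HwN Hw]]]]]].
  exists N, w, psi. split; [auto|]. split; [auto|]. split; [auto|].
  intros r Hr. destruct (Hw r Hr) as [Ha [Hlt [Hb' [Hin Hdom]]]]. split; [auto|].
  intros p Hp. destruct (tangents_In K (psi r) Hin) as [i' [k' [Hi' Epsi]]].
  split; [lra|]. split.
  - intros i k Hi. destruct (Hfar p ltac:(lra) i k Hi) as [Hk | Hle].
    + apply (Hdom p Hp). apply In_tangents; auto.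
    + eapply Rle_trans; [apply Hle|]. apply (Hdom p Hp). apply In_tangents; auto.
  - intros e He. exists i', k'. rewrite <- Epsi. split; [auto | lra].
Qed.

Lemma tconvex_polygon_polygonal :
  bounded_by_countable_polygonal_line (tconvex_polygon t n eta h).
Proof.
  destruct envelope_pieces as [N [w [psi [HN [Hw0 [HwN Hw]]]]]].
  destruct (periodic_pieces on_envelope (fun m => exp (IZR m * t)) N w psi)
    as [pv [phi [Hinc [Hpiece Hcov]]]]; auto.
  - intro m. apply exp_pos.
  - intro m. rewrite HwN, <- exp_plus, plus_IZR. f_equal. ring.
  - intros m p q. apply on_envelope_scale.
  - intros p Hp. apply exp_IZR_mul_cover; auto.
  - intros r Hr. apply Hw, Hr.
  - intros r Hr. apply Hw, Hr.
  - apply (polygonal_of_graph_pieces _ on_envelope pv phi); auto.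
    + apply boundary_iff_on_envelope.
    + apply on_envelope_unique.
    + intros p q [Hp _]. apply Hcov, Hp.
Qed.

Lemma tconvex_polygon_Hpow k x :
  tconvex_polygon t n eta h x -> tconvex_polygon t n eta h (Hpow t k x).
Proof.
  rewrite !tconvex_polygon_iff. destruct (lc_Hpow t k x) as [Ep Eq]. rewrite Ep, Eq.
  rewrite exp_Ropp, (Rmult_comm (/ _)). apply below_tangents_scale.
Qed.

Lemma tconvex_polygon_invariant : invariant_Ht t (tconvex_polygon t n eta h).
Proof.
  intros k y. split.
  - intros [x [Px ->]]. apply tconvex_polygon_Hpow, Px.
  - intros Py. exists (Hpow t (- k) y). split; [apply tconvex_polygon_Hpow, Py|].
    symmetry. apply Hpow_opp.
Qed.

End TConvexPolygon.

Theorem lemma3p3 (t : R) (n : nat) (eta : nat -> pt) (h : nat -> R) :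
  t > 0 ->
  (1 <= n)%nat ->
  (forall i j, (i < n)%nat -> (j < n)%nat -> i <> j -> eta i <> eta j) ->
  (forall i, (i < n)%nat -> in_H (eta i)) ->
  (forall i, (i < n)%nat -> h i > 0) ->
  let P := tconvex_polygon t n eta h in
  convex_set P /\
  (exists x, ~ P x) /\
  (forall x, P x -> future_timelike x) /\
  bounded_by_countable_polygonal_line P /\
  invariant_Ht t P.
Proof.
  intros Ht Hn _ HH Hh P.
  assert (Hpos : forall x, P x -> 0 < lcp x /\ 0 < lcq x).
  { intros x Px. apply (below_tangents_pos t n eta h); auto.
    apply tconvex_polygon_iff; auto. }
  split; [apply tconvex_polygon_convex|].
  split; [exists (0, 0); intros P0; apply Hpos in P0; unfold lcp in P0; simpl in P0; lra|].
  split; [intros x Px; apply future_timelike_of_lc, Hpos, Px|].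
  split; [apply tconvex_polygon_polygonal | apply tconvex_polygon_invariant]; auto.
Qed.
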